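(* Let $X$ be a compactum, let $n\geq2$, and let $f:X\to X$ be a function. Consider the statements: (1) $f$ is multi-transitive; (2) $F_n(f)$ is multi-transitive; (3) $SF_n(f)$ is multi-transitive. Then (2) and (3) are equivalent, and (2) implies (1).
   Context: A compactum is a nondegenerate compact, perfect, Hausdorff topological space. $F_n(X)$ is the set of nonempty subsets of $X$ with at most $n$ points, with the Vietoris topology; $F_1(X)=\{\{x\}:x\in X\}$; $F_n(f)(A)=f(A)$. $SF_n(X)=F_n(X)/F_1(X)$ is the quotient collapsing $F_1(X)$ to a point, $q$ the quotient map, $F_X=q(F_1(X))$, and $SF_n(f)(\chi)=q(F_n(f)(q^{-1}(\chi)))$ for $\chi\neq F_X$, $SF_n(f)(F_X)=F_X$. A function $g:Z\to Z$ is transitive if for all nonempty open $U,V\subseteq Z$ there is $k\in\mathbb{N}$ with $g^k(U)\cap V\neq\emptyset$; $g$ is multi-transitive if for every $m\in\mathbb{N}$ the product $g\times g^2\times\cdots\times g^m:Z^m\to Z^m$ is transitive. *)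

From HB Require Import structures.
From mathcomp Require Import all_boot all_order all_algebra.
From mathcomp Require Import all_classical all_reals all_analysis.
Unset Printing Implicit Defensive.
Local Open Scope classical_set_scope.

Definition compactum (X : topologicalType) : Prop :=
  [/\ (exists x y : X, x <> y), compact [set: X], perfect_set [set: X]
    & hausdorff_space X].

Definition transitive_for (Z : Type) (op : set (set Z)) (g : Z -> Z) : Prop :=
  forall U V : set Z, op U -> op V -> U !=set0 -> V !=set0 ->
    exists k : nat, (0 < k)%N /\ (iter k g @` U) `&` V !=set0.

Definition prod_open (Z : Type) (op : set (set Z)) (m : nat) :
    set (set ('I_m -> Z)) :=
  fun W => forall z, W z -> exists U : 'I_m -> set Z,
    [/\ forall i, op (U i), forall i, U i (z i) &
        [set w | forall i, U i (w i)] `<=` W].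

Definition prod_iter (Z : Type) (g : Z -> Z) (m : nat) :
    ('I_m -> Z) -> ('I_m -> Z) :=
  fun z i => iter (nat_of_ord i).+1 g (z i).

Definition multi_transitive_for (Z : Type) (op : set (set Z)) (g : Z -> Z) :=
  forall m : nat, (0 < m)%N -> transitive_for ('I_m -> Z) (prod_open Z op m) (prod_iter Z g m).

Section Hyper.
Variable X : topologicalType.

Definition isFn (n : nat) (A : set X) : Prop :=
  A !=set0 /\ exists s : seq X, (size s <= n)%N /\ A = [set` s].

Definition Fn (n : nat) := {A : set X | isFn n A}.

Definition vbox (n k : nat) (U : 'I_k -> set X) : set (Fn n) :=
  [set B | proj1_sig B `<=` \bigcup_(i in [set: 'I_k]) U i /\
           forall i, proj1_sig B `&` U i !=set0].

Definition Fn_open (n : nat) : set (set (Fn n)) :=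
  fun W => forall A, W A -> exists k (U : 'I_k -> set X),
    [/\ forall i, open (U i), vbox n k U A & vbox n k U `<=` W].

Lemma isFn_image (n : nat) (f : X -> X) (A : set X) :
  isFn n A -> isFn n (f @` A).
Proof.
move=> [[x Ax] [s [hs eA]]]; split; first by exists (f x); exists x.
exists (map f s); split; first by rewrite size_map.
subst A; apply/seteqP; split=> y /=.
- by case=> z zs <-; apply/mapP; exists z.
- by move=> /mapP [z zs ->]; exists z.
Qed.

Definition Fn_map (n : nat) (f : X -> X) (A : Fn n) : Fn n :=
  exist _ (f @` proj1_sig A) (isFn_image n f (proj1_sig A) (proj2_sig A)).

Definition is_singleton (n : nat) (A : Fn n) : Prop :=
  exists x : X, proj1_sig A = [set x].

(* ---- The quotient SF_n(X) = F_n(X)/F_1(X) ----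
   Modelled as option: None is the collapsed point F_X, and
   Some A corresponds to the (singleton) class of a non-singleton A. *)
Definition SFn (n : nat) := option {A : Fn n | ~ is_singleton n A}.

Definition FX (n : nat) : SFn n := None.

Definition qmap (n : nat) (A : Fn n) : SFn n :=
  match pselect (is_singleton n A) with
  | left _ => None
  | right h => Some (exist _ A h)
  end.

Definition SFn_open (n : nat) : set (set (SFn n)) :=
  fun W => Fn_open n (qmap n @^-1` W).

(* SF_n(f)(chi) = q(F_n(f)(q^{-1}(chi))) for chi <> F_X; SF_n(f)(F_X) = F_X.
   For chi = Some A, q^{-1}(chi) = {A}. *)
Definition SFn_map (n : nat) (f : X -> X) (chi : SFn n) : SFn n :=
  match chi with
  | None => FX n
  | Some A => qmap n (Fn_map n f (proj1_sig A))
  end.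

End Hyper.

(* All three implications are instances of one transfer principle: let R relate
   points of Z to points of Z', be preserved by (g, g'), and let every nonempty
   open set U of Z contain the R-preimage of a nonempty open set U' of Z' all of
   whose points have R-preimages; then a point of U' whose orbit meets V' yields
   a point of U whose orbit meets V.  These hypotheses pass to the products
   Z^m, Z'^m, so multi-transitivity of g' passes to g.
   For (2) => (3) take R = the graph of the quotient map q.  For (3) => (2) take
   its converse: since X is perfect and Hausdorff and n >= 2, every nonempty
   open set of F_n(X) contains a nonempty open set of non-singletons, which is
   q-saturated and hence mapped by q onto an open set.  For (2) => (1) take
   membership x \in A, with U' = {A | A is contained in U}. *)

From mathcomp Require Import all_boot all_order all_algebra.
From mathcomp Require Import all_classical all_reals all_analysis.
Local Open Scope classical_set_scope.

Set Implicit Arguments.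
Unset Strict Implicit.

Definition relates_opens {Z Z' : Type} (op : set (set Z)) (op' : set (set Z'))
    (R : Z -> Z' -> Prop) : Prop :=
  forall U, op U -> U !=set0 -> exists U' : set Z',
    [/\ op' U', U' !=set0, forall z', U' z' -> exists z, R z z'
      & forall z z', R z z' -> U' z' -> U z].

Section RelatedDynamics.
Variables (Z Z' : Type) (op : set (set Z)) (op' : set (set Z')).
Variables (R : Z -> Z' -> Prop) (g : Z -> Z) (g' : Z' -> Z').
Hypothesis R_step : forall z z', R z z' -> R (g z) (g' z').

Lemma iter_related k {z z'} : R z z' -> R (iter k g z) (iter k g' z').
Proof. by elim: k => [//|k IH] /IH /R_step. Qed.

Lemma prod_iter_related m (z : 'I_m -> Z) (z' : 'I_m -> Z') :
  (forall i, R (z i) (z' i)) ->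
  forall i, R (prod_iter Z g m z i) (prod_iter Z' g' m z' i).
Proof. by move=> Rz i; apply: iter_related. Qed.

Lemma transitive_related :
  relates_opens op op' R -> transitive_for Z' op' g' -> transitive_for Z op g.
Proof.
move=> RO trans U V oU oV U0 V0.
have [U' [oU' U'0 U'R RU']] := RO U oU U0.
have [V' [oV' V'0 _ RV']] := RO V oV V0.
have [k [k0 [_ [[z' U'z' <-] V'z']]]] := trans U' V' oU' oV' U'0 V'0.
have [z Rz] := U'R z' U'z'.
exists k; split => //; exists (iter k g z); split.
  by exists z => //; exact: RU' Rz U'z'.
exact: RV' (iter_related k Rz) V'z'.
Qed.

End RelatedDynamics.

Lemma relates_opens_prod (Z Z' : Type) (op : set (set Z)) (op' : set (set Z'))
    (R : Z -> Z' -> Prop) (m : nat) :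
  relates_opens op op' R ->
  relates_opens (prod_open Z op m) (prod_open Z' op' m)
    (fun z z' => forall i, R (z i) (z' i)).
Proof.
move=> RO W oW [c Wc].
have [U [oU Uc UW]] := oW c Wc.
have [U' U'P] := choice (fun i => RO (U i) (oU i) (ex_intro _ _ (Uc i))).
have oU' i : op' (U' i) by case: (U'P i).
have U'0 i : U' i !=set0 by case: (U'P i).
have U'R i z' : U' i z' -> exists z, R z z' by case: (U'P i) => _ _ + _; apply.
have RU' i z z' : R z z' -> U' i z' -> U i z by case: (U'P i) => _ _ _; apply.
exists [set z' | forall i, U' i (z' i)]; split.
- by move=> z' U'z'; exists U'; split.
- by have [c' U'c'] := choice U'0; exists c'.
- by move=> z' U'z'; have [z Rz] := choice (fun i => U'R i _ (U'z' i)); exists z.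
- by move=> z z' Rz U'z'; apply: UW => i; apply: RU' (Rz i) (U'z' i).
Qed.

Lemma multi_transitive_related (Z Z' : Type) (op : set (set Z))
    (op' : set (set Z')) (R : Z -> Z' -> Prop) (g : Z -> Z) (g' : Z' -> Z') :
  (forall z z', R z z' -> R (g z) (g' z')) -> relates_opens op op' R ->
  multi_transitive_for Z' op' g' -> multi_transitive_for Z op g.
Proof.
move=> R_step RO mt m m0.
exact: transitive_related (prod_iter_related R_step (m := m))
  (relates_opens_prod (m := m) RO) (mt m m0).
Qed.

Section Vietoris.
Variables (X : topologicalType) (n : nat).

Definition vboxI {I : finType} (U : I -> set X) : set (Fn X n) :=
  [set B | proj1_sig B `<=` \bigcup_(i in [set: I]) U i /\
           forall i, proj1_sig B `&` U i !=set0].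

Lemma Fn_nonempty (B : Fn X n) : proj1_sig B !=set0.
Proof. by case: (proj2_sig B). Qed.

Lemma isFn_set1 (x : X) : (0 < n)%N -> isFn X n [set x].
Proof.
move=> n0; split; first by exists x.
by exists [:: x]; split => //; apply/seteqP; split => y /=; rewrite inE => /eqP.
Qed.

Lemma vboxI_enum (I : finType) (U : I -> set X) :
  vboxI U = vbox X n #|I| (U \o enum_val).
Proof.
apply/seteqP; split => B [BU BmU]; split.
- by move=> x /BU [i _ Uix]; exists (enum_rank i) => //=; rewrite enum_rankK.
- by move=> j; apply: BmU.
- by move=> x /BU [j _ Ujx]; exists (enum_val j).
- by move=> i; rewrite -(enum_rankK i); apply: BmU.
Qed.

Lemma vboxI_open (I : finType) (U : I -> set X) :
  (forall i, open (U i)) -> Fn_open X n (vboxI U).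
Proof.
move=> oU A UA; exists #|I|, (U \o enum_val).
by rewrite -vboxI_enum; split => // j; apply: oU.
Qed.

Lemma vboxI_setI (I J : finType) (U : I -> set X) (V : J -> set X) :
  vboxI U `&` vboxI V =
  vboxI (fun ij : I + J => match ij with
    | inl i => U i `&` \bigcup_(j in [set: J]) V j
    | inr j => V j `&` \bigcup_(i in [set: I]) U i end).
Proof.
apply/seteqP; split => B.
- move=> [[BU BmU] [BV BmV]]; split.
  + move=> x Bx; have [i _ Uix] := BU x Bx.
    by exists (inl i) => //; split; last exact: BV.
  + case=> [i|j].
    * by have [x [Bx Uix]] := BmU i; exists x; split; last split; last exact: BV.
    * by have [x [Bx Vjx]] := BmV j; exists x; split; last split; last exact: BU.
- move=> [BUV BmUV]; split; split.
  + by move=> x /BUV [[i|j] _ [Ux ?]] //; exists i.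
  + by move=> i; have [x [Bx [Uix _]]] := BmUV (inl i); exists x.
  + by move=> x /BUV [[i|j] _ [Vx ?]] //; exists j.
  + by move=> j; have [x [Bx [Vjx _]]] := BmUV (inr j); exists x.
Qed.

Lemma Fn_openI (W1 W2 : set (Fn X n)) :
  Fn_open X n W1 -> Fn_open X n W2 -> Fn_open X n (W1 `&` W2).
Proof.
move=> oW1 oW2 A [W1A W2A].
have [k [U [oU UA UW1]]] := oW1 A W1A.
have [l [V [oV VA VW2]]] := oW2 A W2A.
have oUV : Fn_open X n (vboxI U `&` vboxI V).
  rewrite vboxI_setI; apply: vboxI_open => -[i|j];
    by apply: openI => //; apply: bigcup_open.
have [m [W [oW WA WUV]]] := oUV A (conj UA VA).
by exists m, W; split => // B /WUV [/UW1 ? /VW2 ?].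
Qed.

Lemma Fn_open_meet (V : set X) :
  open V -> Fn_open X n [set B | proj1_sig B `&` V !=set0].
Proof.
move=> oV; have -> : [set B | proj1_sig B `&` V !=set0] =
    vboxI (fun b : bool => if b then V else setT).
  apply/seteqP; split => B; last by case=> _ /(_ true).
  move=> BV; split; first by move=> x _; exists false.
  by case => //; have [x Bx] := Fn_nonempty B; exists x.
by apply: vboxI_open => -[]; [exact: oV | exact: openT].
Qed.

Lemma Fn_open_sub (V : set X) :
  open V -> Fn_open X n [set B | proj1_sig B `<=` V].
Proof.
move=> oV; have -> : [set B | proj1_sig B `<=` V] = vboxI (fun _ : unit => V).
  apply/seteqP; split => B; last by case=> BV _ x /BV [].
  move=> BV; split; first by move=> x /BV; exists tt.
  by move=> _; have [x Bx] := Fn_nonempty B; exists x; split => //; apply: BV.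
exact: vboxI_open.
Qed.

Lemma nonsingletonP (B : Fn X n) : ~ is_singleton X n B <->
  exists x y, [/\ proj1_sig B x, proj1_sig B y & x != y].
Proof.
split=> [nsB|[x [y [Bx By xy]]] [w Bw]]; last first.
  by rewrite Bw /= in Bx By; rewrite Bx By eqxx in xy.
have [x Bx] := Fn_nonempty B.
apply: contrapT => no; apply: nsB; exists x.
apply/seteqP; split => y /=; last by move->.
move=> By; have [//|yx] := eqVneq y x.
by exfalso; apply: no; exists x, y; rewrite eq_sym.
Qed.

Lemma Fn_open_nonsingleton :
  hausdorff_space X -> Fn_open X n [set B | ~ is_singleton X n B].
Proof.
rewrite open_hausdorff => hX B nsB.
have [x [y [Bx By /hX [[Vx Vy] /=]]]] := (nonsingletonP B).1 nsB.
rewrite !inE => -[Vxx Vyy] [oVx oVy VxVy0].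
have [k [U [oU UB UW]]] := Fn_openI (Fn_open_meet oVx) (Fn_open_meet oVy)
  (conj (ex_intro _ x (conj Bx Vxx)) (ex_intro _ y (conj By Vyy))).
exists k, U; split => // C /UW [[x' [Cx' Vxx']] [y' [Cy' Vyy']]].
apply/nonsingletonP; exists x', y'; split => //; apply/eqP => xy'.
by rewrite -xy' in Vyy'; move/seteqP: VxVy0 => [/(_ x' (conj Vxx' Vyy'))].
Qed.

Lemma exists_nonsingleton (W : set (Fn X n)) :
  perfect_set [set: X] -> (2 <= n)%N -> Fn_open X n W -> W !=set0 ->
  exists2 B, W B & ~ is_singleton X n B.
Proof.
move=> pX n2 oW [A WA].
have [k [U [oU [AU AmU] UW]]] := oW A WA.
have [[x Ax]|] := pselect (is_singleton X n A); last by exists A.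
have Ux i : U i x by have [y [+ Uiy]] := AmU i; rewrite Ax => /= <-.
have [i0 _ _] : (\bigcup_(i in [set: 'I_k]) U i) x by apply: AU; rewrite Ax.
have : nbhs x (fun y => forall i, U i y).
  by apply: filter_forall => i; apply: open_nbhs_nbhs; split.
rewrite nbhsE => -[V [oV Vx] VU].
have [y [z [Vy Vz yz]]] := (perfectTP_ex.1 pX) V oV (ex_intro _ x Vx).
have isFn_yz : isFn X n [set` [:: y; z]].
  by split; [exists y; rewrite /= inE eqxx | exists [:: y; z]].
exists (exist _ _ isFn_yz).
  apply: UW; split => /=.
  - by move=> w /=; rewrite !inE => /orP[] /eqP ->; exists i0 => //; apply: VU.
  - by move=> i; exists y; split; [rewrite /= inE eqxx | exact: VU].
by apply/nonsingletonP; exists y, z; rewrite /= !inE !eqxx orbT.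
Qed.

End Vietoris.

Section Quotient.
Variables (X : topologicalType) (n : nat).

Lemma qmap_singleton (B : Fn X n) : is_singleton X n B -> qmap X n B = FX X n.
Proof. by rewrite /qmap; case: pselect. Qed.

Lemma qmap_nonsingleton (B : Fn X n) (nsB : ~ is_singleton X n B) :
  qmap X n B = Some (exist _ B nsB).
Proof.
rewrite /qmap; case: pselect => // nsB'.
by congr Some; congr exist; apply: Prop_irrelevance.
Qed.

Lemma qmap_Fn_map (f : X -> X) (B : Fn X n) :
  qmap X n (Fn_map X n f B) = SFn_map X n f (qmap X n B).
Proof.
have [[x Bx]|nsB] := pselect (is_singleton X n B); last first.
  by rewrite (qmap_nonsingleton nsB).
rewrite [qmap X n B]qmap_singleton; last by exists x.
by apply: qmap_singleton; exists (f x); rewrite /= Bx image_set1.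
Qed.

Lemma qmap_surj (x : X) : (0 < n)%N -> forall chi, exists B, qmap X n B = chi.
Proof.
move=> n0 [[B nsB]|]; first by exists B; apply: qmap_nonsingleton.
by exists (exist _ _ (isFn_set1 x n0)); apply: qmap_singleton; exists x.
Qed.

Lemma qmap_inj_nonsingleton (B C : Fn X n) :
  ~ is_singleton X n C -> qmap X n B = qmap X n C -> B = C.
Proof.
move=> nsC; rewrite (qmap_nonsingleton nsC).
have [/qmap_singleton -> //|nsB] := pselect (is_singleton X n B).
by rewrite (qmap_nonsingleton nsB) => -[].
Qed.

Lemma qmap_preimage_image (W : set (Fn X n)) :
  W `<=` [set B | ~ is_singleton X n B] -> qmap X n @^-1` (qmap X n @` W) = W.
Proof.
move=> Wns; apply/seteqP; split => B; last by move=> WB; exists B.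
by move=> [C WC qCB]; rewrite (qmap_inj_nonsingleton (Wns C WC) (esym qCB)).
Qed.

End Quotient.

Lemma relates_opens_SFn_Fn (X : topologicalType) (n : nat) (x : X) :
  (0 < n)%N ->
  relates_opens (SFn_open X n) (Fn_open X n) (fun chi B => qmap X n B = chi).
Proof.
move=> n0 W oW [chi Wchi]; exists (qmap X n @^-1` W); split => //.
- by have [B qB] := qmap_surj x n0 chi; exists B; rewrite /= qB.
- by move=> B _; exists (qmap X n B).
- by move=> chi' B <-.
Qed.

Lemma relates_opens_Fn_SFn (X : topologicalType) (n : nat) :
  perfect_set [set: X] -> hausdorff_space X -> (2 <= n)%N ->
  relates_opens (Fn_open X n) (SFn_open X n) (fun B chi => qmap X n B = chi).
Proof.
move=> pX hX n2 W oW W0.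
pose W1 := W `&` [set B | ~ is_singleton X n B].
have qW1 : qmap X n @^-1` (qmap X n @` W1) = W1.
  by apply: qmap_preimage_image => B [].
exists (qmap X n @` W1); split.
- by rewrite /SFn_open qW1; apply: Fn_openI => //; apply: Fn_open_nonsingleton.
- by have [B WB nsB] := exists_nonsingleton pX n2 oW W0; exists (qmap X n B), B.
- by move=> _ [B _ <-]; exists B.
- by move=> B _ <- qB; have [] : W1 B by rewrite -qW1.
Qed.

Lemma relates_opens_X_Fn (X : topologicalType) (n : nat) : (0 < n)%N ->
  relates_opens (@open X) (Fn_open X n) (fun x B => proj1_sig B x).
Proof.
move=> n0 U oU [x Ux]; exists [set B | proj1_sig B `<=` U]; split.
- exact: Fn_open_sub.
- by exists (exist _ _ (isFn_set1 x n0)) => y /= ->.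
- by move=> B _; apply: Fn_nonempty.
- by move=> y B By BU; apply: BU.
Qed.

Theorem theorem9 (X : topologicalType) (n : nat) (f : X -> X) :
  compactum X -> (2 <= n)%N ->
  (multi_transitive_for (Fn X n) (Fn_open X n) (Fn_map X n f) <->
   multi_transitive_for (SFn X n) (SFn_open X n) (SFn_map X n f)) /\
  (multi_transitive_for (Fn X n) (Fn_open X n) (Fn_map X n f) ->
   multi_transitive_for X (@open X) f).
Proof.
move=> [[x _] _ pX hX] n2; have n0 : (0 < n)%N := ltnW n2.
split; [split|].
- apply: multi_transitive_related (relates_opens_SFn_Fn x n0).
  by move=> _ B <-; rewrite qmap_Fn_map.
- apply: multi_transitive_related (relates_opens_Fn_SFn pX hX n2).
  by move=> B _ <-; rewrite qmap_Fn_map.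
- apply: multi_transitive_related (relates_opens_X_Fn n0).
  by move=> y B By; exists y.
Qed.
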